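(* Let $R\subseteq S$ be as in the context, let $n=n_1+\cdots+n_\ell$, and let $\mathcal{C}\subseteq S^n$ be any code (linear or not) such that $k=\log_{|S|}|\mathcal{C}|$ is a positive integer. Then $\mathcal{C}$ is MSRD over $R$ for the length partition $n=n_1+\cdots+n_\ell$ if and only if, for all invertible matrices $A_i\in R^{n_i\times n_i}$ ($i=1,\ldots,\ell$), the code $\mathcal{C}\,{\rm Diag}(A_1,\ldots,A_\ell)=\{\mathbf{c}\,{\rm Diag}(A_1,\ldots,A_\ell):\mathbf{c}\in\mathcal{C}\}$ is MDS.
   Context: $R$ is a finite commutative chain ring with maximal ideal $\mathfrak{m}$; $S=R[x]/(h)$ with $h\in R[x]$ monic of degree $m$ irreducible modulo $\mathfrak{m}$, a free $R$-module of rank $m$. Rank: for $\mathbf{u}\in S^s$, fix an $R$-basis $\alpha_1,\ldots,\alpha_m$ of $S$ and write $\mathbf{u}=\sum_{i=1}^m\alpha_i(c_{i,1},\ldots,c_{i,s})$ with $c_{i,j}\in R$; ${\rm rk}(\mathbf{u})$ is the number of nonzero diagonal entries in the Smith normal form of $(c_{i,j})\in R^{m\times s}$. For $\mathbf{c}=(\mathbf{c}^{(1)},\ldots,\mathbf{c}^{(\ell)})\in S^n$ with $\mathbf{c}^{(i)}\in S^{n_i}$, ${\rm wt}_{SR}(\mathbf{c})=\sum_i{\rm rk}(\mathbf{c}^{(i)})$ and ${\rm d}_{SR}(\mathcal{C})$ is the minimum of ${\rm wt}_{SR}(\mathbf{c}-\mathbf{d})$ over distinct $\mathbf{c},\mathbf{d}\in\mathcal{C}$.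 $\mathcal{C}$ is MSRD if $k$ is a positive integer and ${\rm d}_{SR}(\mathcal{C})=n-k+1$. A code $\mathcal{D}\subseteq S^n$ with $\log_{|S|}|\mathcal{D}|=k$ is MDS if its minimum Hamming distance equals $n-k+1$. *)

From HB Require Import structures.
From mathcomp Require Import all_boot all_order all_algebra.
Set Implicit Arguments. Unset Strict Implicit. Unset Printing Implicit Defensive.
Import Order.TTheory GRing.Theory Num.Theory.
Local Open Scope ring_scope.

Section Defs.
Variable R : finComUnitRingType.

Definition is_ideal (I : {set R}) : bool :=
  [&& (0 : R) \in I,
      [forall x, forall y, (x \in I) ==> (y \in I) ==> (x + y \in I)] &
      [forall a, forall x, (x \in I) ==> (a * x \in I)]].

Definition chain_ring : Prop :=
  forall I J : {set R}, is_ideal I -> is_ideal J -> (I \subset J) \/ (J \subset I).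

(* The maximal ideal of the (local) chain ring R: its non-units. *)
Definition maxideal : {set R} := [set x : R | x \notin GRing.unit].

(* h is irreducible modulo the maximal ideal: the reduction of h in
   (R/m)[x] has degree >= 1 and admits no factorisation into two
   non-constant factors (written out via lifts to R[x]). *)
Definition irreducible_mod_max (h : {poly R}) : Prop :=
  (1 < size h)%N /\
  ~ exists f g : {poly R},
      [exists i : 'I_(size f), (0 < val i)%N && (f`_i \notin maxideal)] /\
      [exists i : 'I_(size g), (0 < val i)%N && (g`_i \notin maxideal)] /\
      forall i, (h - f * g)`_i \in maxideal.

(* S = R[x]/(h), with m = deg h, is represented by coordinate vectors in
   R^m with respect to the R-basis 1, x, ..., x^(m-1). *)
Definition Selt (m : nat) := 'rV[R]_m.

Definition dvdR (a b : R) : bool := [exists c : R, b == c * a].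

Definition is_snf m s (D : 'M[R]_(m, s)) : bool :=
  [forall i : 'I_m, forall j : 'I_s, (val i != val j) ==> (D i j == 0)] &&
  [forall i : 'I_m, forall j : 'I_s, forall i' : 'I_m, forall j' : 'I_s,
     [&& val i == val j, val i' == val j' & val i' == (val i).+1] ==>
       dvdR (D i j) (D i' j')].

Definition n_nonzero_diag m s (D : 'M[R]_(m, s)) : nat :=
  #|[set i : 'I_m | [exists j : 'I_s, (val i == val j) && (D i j != 0)]]|.

Definition snf_with_rank m s (M : 'M[R]_(m, s)) (r : nat) : bool :=
  [exists P : 'M[R]_m, exists Q : 'M[R]_s,
     [&& P \in unitmx, Q \in unitmx, is_snf (P *m M *m Q) &
         n_nonzero_diag (P *m M *m Q) == r]].

(* number of nonzero diagonal entries of the Smith normal form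
   (well defined: first r for which an SNF with r nonzero entries exists) *)
Definition snf_rank m s (M : 'M[R]_(m, s)) : nat :=
  find (snf_with_rank M) (iota 0 (minn m s).+1).

Definition coord_mx m s (u : 'rV[Selt m]_s) : 'M[R]_(m, s) :=
  \matrix_(i < m, j < s) (u 0 j) 0 i.

Definition rk m s (u : 'rV[Selt m]_s) : nat := snf_rank (coord_mx u).

Definition wt_SR m l (ns : 'I_l -> nat) (c : 'rV[Selt m]_(\sum_i ns i)) : nat :=
  (\sum_(i < l) rk (submxrow (q_ := ns) c i))%N.

Definition wt_H m n (c : 'rV[Selt m]_n) : nat := #|[set j : 'I_n | c 0 j != 0]|.

(* minimum distance of a code w.r.t. a weight (n.+1 if fewer than 2 words) *)
Definition min_dist m n (wt : 'rV[Selt m]_n -> nat) (C : {set 'rV[Selt m]_n}) : nat :=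
  \big[minn/n.+1]_(c in C) \big[minn/n.+1]_(d in C | d != c) wt (c - d).

Definition d_SR m l (ns : 'I_l -> nat) (C : {set 'rV[Selt m]_(\sum_i ns i)}) :=
  min_dist (@wt_SR m l ns) C.

Definition d_H m n (C : {set 'rV[Selt m]_n}) := min_dist (@wt_H m n) C.

Definition MSRD m l (ns : 'I_l -> nat) (C : {set 'rV[Selt m]_(\sum_i ns i)}) : Prop :=
  exists k : nat, (0 < k)%N /\ #|C| = (#|{: Selt m}| ^ k)%N /\
    (d_SR C + k = (\sum_i ns i).+1)%N.

Definition MDS m n (D : {set 'rV[Selt m]_n}) : Prop :=
  exists k : nat, #|D| = (#|{: Selt m}| ^ k)%N /\ (d_H D + k = n.+1)%N.

Definition act_mx m n (c : 'rV[Selt m]_n) (A : 'M[R]_n) : 'rV[Selt m]_n :=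
  \row_j \sum_i A i j *: c 0 i.

Definition code_diag m l (ns : 'I_l -> nat) (C : {set 'rV[Selt m]_(\sum_i ns i)})
    (A : forall i, 'M[R]_(ns i)) : {set 'rV[Selt m]_(\sum_i ns i)} :=
  [set act_mx c (mxdiag A) | c in C].

End Defs.

From HB Require Import structures.
From mathcomp Require Import all_boot all_order all_algebra perm zify.
Import Order.TTheory GRing.Theory Num.Theory.
Set Implicit Arguments. Unset Strict Implicit. Unset Printing Implicit Defensive.
Local Open Scope ring_scope.

(* Over a chain ring the principal ideals are totally ordered, so an entry of
   M dividing all the others can always be found and the usual pivoting brings
   M to Smith normal form P M Q.  The number of nonzero diagonal entries so
   obtained is the least number of nonzero columns of M A over invertible A.
   Applied to the coordinate matrices of the blocks of a word c, this says that
   wt_SR(c) is the minimum of the Hamming weights of c Diag(A_1, ..., A_l) over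
   invertible A_i; hence d_SR(C) is the minimum of d_H(C Diag(A)) over all such
   A, and each C Diag(A) still has |S|^k words.  By the Singleton bound
   d_H + k <= n + 1, d_SR(C) therefore equals n - k + 1 exactly when every
   C Diag(A) does. *)

Section Divisibility.
Variable R : finComUnitRingType.
Hypothesis chainR : chain_ring R.

Lemma dvdRP (a b : R) : reflect (exists c, b = c * a) (dvdR a b).
Proof. by apply: (iffP existsP) => [[c /eqP ->]|[c ->]]; exists c. Qed.

Lemma dvdRR (a : R) : dvdR a a.
Proof. by apply/dvdRP; exists 1; rewrite mul1r. Qed.

Lemma dvdR0 (a : R) : dvdR a 0.
Proof. by apply/dvdRP; exists 0; rewrite mul0r. Qed.

Lemma dvdRD (a x y : R) : dvdR a x -> dvdR a y -> dvdR a (x + y).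
Proof.
by move=> /dvdRP[c ->] /dvdRP[d ->]; apply/dvdRP; exists (c + d); rewrite mulrDl.
Qed.

Lemma dvdRMl (a x y : R) : dvdR a x -> dvdR a (y * x).
Proof. by move=> /dvdRP[c ->]; apply/dvdRP; exists (y * c); rewrite mulrA. Qed.

Lemma dvdRMr (a x y : R) : dvdR a x -> dvdR a (x * y).
Proof. by rewrite mulrC; apply: dvdRMl. Qed.

Lemma dvdR_trans (a b c : R) : dvdR a b -> dvdR b c -> dvdR a c.
Proof.
by move=> /dvdRP[u ->] /dvdRP[v ->]; apply/dvdRP; exists (v * u); rewrite mulrA.
Qed.

Lemma dvdR_sum (I : finType) (a : R) (F : I -> R) :
  (forall i, dvdR a (F i)) -> dvdR a (\sum_i F i).
Proof. by move=> aF; apply: (big_ind (dvdR a)) => //; [apply: dvdR0 | apply: dvdRD]. Qed.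

Lemma dvdR_mulmxl (a : R) m n p (X : 'M[R]_(m, n)) (B : 'M[R]_(n, p)) :
  (forall i j, dvdR a (B i j)) -> forall i j, dvdR a ((X *m B) i j).
Proof. by move=> aB i j; rewrite mxE; apply: dvdR_sum => k; apply: dvdRMl. Qed.

Lemma dvdR_mulmxr (a : R) m n p (B : 'M[R]_(m, n)) (Y : 'M[R]_(n, p)) :
  (forall i j, dvdR a (B i j)) -> forall i j, dvdR a ((B *m Y) i j).
Proof. by move=> aB i j; rewrite mxE; apply: dvdR_sum => k; apply: dvdRMr. Qed.

Definition principal_ideal (a : R) : {set R} := [set x | dvdR a x].

Lemma principal_ideal_is_ideal a : is_ideal (principal_ideal a).
Proof.
apply/and3P; split; first by rewrite inE dvdR0.
- by apply/'forall_'forall_implyP => x y; rewrite !inE => ax; apply/implyP; apply: dvdRD.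
- by apply/'forall_'forall_implyP => c x; rewrite !inE; apply: dvdRMl.
Qed.

Lemma dvdR_total (a b : R) : dvdR a b \/ dvdR b a.
Proof.
have [/subsetP ab|/subsetP ba] :=
  chainR (principal_ideal_is_ideal a) (principal_ideal_is_ideal b).
- by right; have := ab a; rewrite !inE dvdRR; apply.
- by left; have := ba b; rewrite !inE dvdRR; apply.
Qed.
End Divisibility.

Section NonzeroColumns.
Variable R : finComUnitRingType.

Definition nzcols m s (M : 'M[R]_(m, s)) : nat :=
  #|[set j : 'I_s | [exists i, M i j != 0]]|.

Lemma nzcols_le m s (M : 'M[R]_(m, s)) : (nzcols M <= s)%N.
Proof. by rewrite /nzcols (leq_trans (max_card _)) ?card_ord. Qed.

Lemma nzcols_mulmx m n s (X : 'M[R]_(m, n)) (Y : 'M[R]_(n, s)) :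
  (nzcols (X *m Y) <= nzcols Y)%N.
Proof.
apply/subset_leq_card/subsetP => j; rewrite !inE; apply: contraLR.
rewrite !negb_exists => /forallP Y0; apply/forallP => i; rewrite negbK mxE.
by rewrite big1 // => k _; rewrite (eqP (negbNE (Y0 k))) mulr0.
Qed.

Lemma nzcols_col_perm m s (M : 'M[R]_(m, s)) (p : 'S_s) :
  nzcols (col_perm p M) = nzcols M.
Proof.
rewrite /nzcols -[in RHS](card_preimset _ (@perm_inj _ p)); apply: eq_card => j.
by rewrite !inE; apply: eq_existsb => i; rewrite mxE.
Qed.

Lemma nzcols_rsubmx m s (M : 'M[R]_(m, 1 + s)) i0 : M i0 0 != 0 ->
  (1 + nzcols (rsubmx M) <= nzcols M)%N.
Proof.
move=> nzM; rewrite /nzcols -(card_imset _ (@rshift_inj 1 s)).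
set Mr := @rshift 1 s @: _.
have notin0 : lshift s ord0 \notin Mr by apply/imsetP => -[j _ /eqP]; rewrite -val_eqE.
have -> : (1 + #|Mr| = #|lshift s ord0 |: Mr|)%N by rewrite cardsU1 notin0.
apply/subset_leq_card/subsetP => j /setU1P[->|/imsetP[j' /[!inE] /existsP[i nzMr] ->]].
  by rewrite inE; apply/existsP; exists i0; rewrite (_ : lshift s ord0 = 0) //; apply: val_inj.
by apply/existsP; exists i; rewrite mxE in nzMr.
Qed.

Lemma nzcols_mxrow m l (ns : 'I_l -> nat) (X : 'M[R]_(m, \sum_i ns i)) :
  nzcols X = (\sum_i nzcols (submxrow X i))%N.
Proof.
rewrite /nzcols -sum1_card big_mkcond /=; symmetry.
under eq_bigr do rewrite -sum1_card big_mkcond /=.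
rewrite sig_big_dep (reindex _ tagnat.rank_bij_on); apply: eq_bigr => -[i j] _ /=.
by rewrite tagnat.rankE !inE; under eq_existsb do rewrite mxE.
Qed.

Lemma n_nonzero_diag_le m s (D : 'M[R]_(m, s)) : (n_nonzero_diag D <= m)%N.
Proof. by rewrite /n_nonzero_diag (leq_trans (max_card _)) ?card_ord. Qed.

Lemma nzcols_snf m s (D : 'M[R]_(m, s)) : is_snf D -> (nzcols D <= n_nonzero_diag D)%N.
Proof.
case/andP => /'forall_forallP offdiag0 _.
have diag j i : D i j != 0 -> val i = val j.
  by apply: contraNeq => ne; rewrite (eqP (implyP (offdiag0 i j) ne)).
rewrite /nzcols /n_nonzero_diag !cardE.
rewrite -(size_map val (enum [set j | _])) -(size_map val (enum [set i | _])).
apply: uniq_leq_size => [|_ /mapP[j /[!mem_enum] /[!inE] /existsP[i nzD] ->]].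
  by rewrite map_inj_uniq ?enum_uniq //; apply: val_inj.
rewrite -(diag j i nzD); apply: map_f; rewrite mem_enum inE.
by apply/existsP; exists j; rewrite (diag j i nzD) eqxx.
Qed.

Lemma is_snf0 m s : is_snf (0 : 'M[R]_(m, s)).
Proof.
apply/andP; split; apply/'forall_forallP => i j; rewrite ?mxE ?eqxx ?implybT //.
by apply/'forall_forallP => i' j'; rewrite mxE; apply/implyP => _; apply: dvdR0.
Qed.

Lemma n_nonzero_diag0 m s : n_nonzero_diag (0 : 'M[R]_(m, s)) = 0%N.
Proof.
apply/eqP; rewrite cards_eq0; apply/eqP/setP => i; rewrite !inE.
by apply/existsP => -[j]; rewrite mxE eqxx andbF.
Qed.

Lemma is_snf_block m s (a : R) (D : 'M[R]_(m, s)) :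
  is_snf D -> (forall i j, dvdR a (D i j)) ->
  is_snf (block_mx a%:M 0 0 D : 'M_(1 + m, 1 + s)).
Proof.
case/andP => /'forall_forallP offdiag0 /'forall_forallP dvd_next aD.
apply/andP; split; apply/'forall_forallP => i j.
  case: (split_ordP i) => i1 ->; case: (split_ordP j) => j1 ->;
    rewrite ?block_mxEul ?block_mxEur ?block_mxEdl ?block_mxEdr ?mxE ?eqxx ?implybT //=.
  - by rewrite (ord1 i1) (ord1 j1) eqxx.
  - by rewrite eqn_add2l; apply: offdiag0.
apply/'forall_forallP => i' j'; apply/implyP => /and3P[/eqP eij /eqP ei'j' /eqP ei'i].
case: (split_ordP i) eij ei'i => i1 -> /=; case: (split_ordP j) => j1 -> /= eij;
case: (split_ordP i') ei'j' => i2 -> /=; case: (split_ordP j') => j2 -> /= ei'j' ei'i;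
  rewrite ?block_mxEul ?block_mxEur ?block_mxEdl ?block_mxEdr ?mxE ?dvdR0 //;
  move: (ltn_ord i1) (ltn_ord j1) (ltn_ord i2) (ltn_ord j2) => *; try by exfalso; lia.
- by rewrite (ord1 i1) (ord1 j1) eqxx mulr1n aD.
- apply: (implyP (forallP (forallP (dvd_next i1 j1) i2) j2)).
  by apply/and3P; split; apply/eqP => /=; lia.
Qed.

Lemma n_nonzero_diag_block m s (a : R) (D : 'M[R]_(m, s)) :
  (n_nonzero_diag (block_mx a%:M 0 0 D : 'M_(1 + m, 1 + s)) <= 1 + n_nonzero_diag D)%N.
Proof.
rewrite /n_nonzero_diag -(card_imset _ (@rshift_inj 1 m)).
set Dr := @rshift 1 m @: _.
apply: (@leq_trans #|lshift m ord0 |: Dr|); last by rewrite cardsU1 leq_add2r leq_b1.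
apply/subset_leq_card/subsetP => i /[!inE] /existsP[j /andP[eij nzD]].
case: (split_ordP i) eij nzD => i1 ->; first by rewrite (ord1 i1) eqxx.
case: (split_ordP j) => j1 -> eij; rewrite ?block_mxEdl ?block_mxEdr ?mxE ?eqxx // => nzD.
apply/orP; right; apply/imsetP; exists i1 => //.
by rewrite inE; apply/existsP; exists j1; rewrite -eqSS eij.
Qed.

Lemma unitmx_block1 m (P : 'M[R]_m) :
  P \in unitmx -> (block_mx 1%:M 0 0 P : 'M_(1 + m)) \in unitmx.
Proof. by rewrite !unitmxE det_ublock det1 mul1r. Qed.

Lemma mulmx_block1 m s (a : R) (B : 'M[R]_(m, s)) (P : 'M_m) (Q : 'M_s) :
  block_mx 1%:M 0 0 P *m block_mx a%:M 0 0 B *m block_mx 1%:M 0 0 Q =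
  block_mx a%:M 0 0 (P *m B *m Q) :> 'M_(1 + m, 1 + s).
Proof.
by rewrite !mulmx_block !mul1mx !mul0mx !mulmx0 !mulmx1 !addr0 !add0r mul0mx.
Qed.
End NonzeroColumns.

Section SmithNormalForm.
Variable R : finComUnitRingType.
Hypothesis chainR : chain_ring R.

(* An entry whose principal ideal has maximal size works: by totality of the
   ideal order, that ideal contains every other entry's. *)
Lemma pivot_exists m s (M : 'M[R]_(m, s)) i0 j0 : M i0 j0 != 0 ->
  exists i j, M i j != 0 /\ forall i' j', dvdR (M i j) (M i' j').
Proof.
move=> nzM.
pose ideal_size (p : 'I_m * 'I_s) := #|principal_ideal (M p.1 p.2)|.
have [[i j] _ maxij] := @arg_maxnP _ (i0, j0) xpredT ideal_size isT.
have dvdM i' j' : dvdR (M i j) (M i' j').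
  have [//|dvd'] := dvdR_total chainR (M i j) (M i' j').
  have sub : principal_ideal (M i j) \subset principal_ideal (M i' j').
    by apply/subsetP => x; rewrite !inE; apply: dvdR_trans.
  have := maxij (i', j') isT.
  rewrite /ideal_size /= (geq_leqif (subset_leqif_card sub)) => /subsetP.
  by move=> /(_ (M i' j')); rewrite !inE dvdRR; apply.
exists i, j; split => //.
by apply: contraNneq nzM => Mij0; have /dvdRP[c ->] := dvdM i0 j0; rewrite Mij0 mulr0.
Qed.

Lemma pivot_elimination m s (M : 'M[R]_(1 + m, 1 + s)) :
  (forall i j, dvdR (M 0 0) (M i j)) ->
  exists L U (X : 'M[R]_(m, 1 + m)), [/\ L \in unitmx, U \in unitmx &
    L *m M *m U = block_mx (M 0 0)%:M 0 0 (X *m rsubmx M)].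
Proof.
move=> dvdM; set a := M 0 0 in dvdM *.
pose quot x := odflt 0 [pick y | x == y * a].
have quotK x : dvdR a x -> quot x * a = x.
  by case/dvdRP => y ->; rewrite /quot; case: pickP => [z /eqP //|/(_ y)]; rewrite eqxx.
pose c : 'M[R]_(m, 1) := \matrix_(i, j) quot (dlsubmx M i j).
pose r : 'M[R]_(1, s) := \matrix_(i, j) quot (ursubmx M i j).
have ulE : ulsubmx M = a%:M.
  by rewrite [LHS]mx11_scalar !mxE; congr (_%:M); congr (M _ _); apply/val_inj.
have dlE : dlsubmx M = c *m a%:M.
  by apply/matrixP => i j; rewrite mul_mx_scalar !mxE mulrC quotK.
have urE : ursubmx M = a%:M *m r.
  by apply/matrixP => i j; rewrite mul_scalar_mx !mxE mulrC quotK.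
have rsubE : rsubmx M = col_mx (ursubmx M) (drsubmx M).
  by rewrite -[LHS]vsubmxK; congr col_mx; apply/matrixP => i j; rewrite !mxE.
exists (block_mx 1%:M 0 (- c) 1%:M), (block_mx 1%:M (- r) 0 1%:M), (row_mx (- c) 1%:M).
split.
- by rewrite unitmxE det_lblock !det1 mul1r unitr1.
- by rewrite unitmxE det_ublock !det1 mul1r unitr1.
rewrite rsubE -[M in LHS]submxK ulE dlE urE mul_row_col !mulmx_block.
rewrite !mul1mx !mul0mx !mulmx1 !mulmx0 !mulNmx !addr0 mulmxN !addNr.
by rewrite mul0mx add0r.
Qed.

Lemma snf_exists m s (M : 'M[R]_(m, s)) :
  exists P Q, [/\ P \in unitmx, Q \in unitmx, is_snf (P *m M *m Q) &
    (n_nonzero_diag (P *m M *m Q) <= nzcols M)%N].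
Proof.
elim: m s M => [|m IHm] s M; last have [->|/matrix0Pn[i0 [j0 nzM]]] := eqVneq M 0.
1,2: by exists 1%:M, 1%:M; rewrite ?[M]flatmx0 mul1mx mulmx1 !unitmx1 is_snf0 n_nonzero_diag0.
case: s M i0 j0 nzM => [|s] M i0 j0 nzM; first by case: (j0).
have [i1 [j1 [nzMij dvdMij]]] := pivot_exists nzM.
pose M1 : 'M[R]_(1 + m, 1 + s) := xrow i1 0 (xcol j1 0 M).
have M1E i j : M1 i j = M (tperm i1 0 i) (tperm j1 0 j) by rewrite !mxE.
have dvdM1 i j : dvdR (M1 0 0) (M1 i j) by rewrite !M1E !tpermR.
have [L [U [X [uL uU LMU]]]] := pivot_elimination dvdM1.
set a := M1 0 0 in dvdM1 LMU; set B := X *m rsubmx M1 in LMU.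
have dvdB : forall i j, dvdR a (B i j) by apply: dvdR_mulmxl => i j; rewrite mxE.
have [P [Q [uP uQ snfD leD]]] := IHm _ B.
exists (block_mx 1%:M 0 0 P *m L *m tperm_mx i1 0),
  (tperm_mx j1 0 *m U *m block_mx 1%:M 0 0 Q).
have -> : block_mx 1%:M 0 0 P *m L *m tperm_mx i1 0 *m M *m
    (tperm_mx j1 0 *m U *m block_mx 1%:M 0 0 Q) = block_mx a%:M 0 0 (P *m B *m Q).
  by rewrite -mulmx_block1 -LMU /M1 xrowE xcolE !mulmxA.
split; rewrite ?unitmx_mul ?unitmx_block1 ?uL ?uU ?unitmx_perm //.
  by apply: is_snf_block => //; apply/dvdR_mulmxr/dvdR_mulmxl.
apply: leq_trans (n_nonzero_diag_block _ _) _.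
apply: (@leq_trans (1 + nzcols (rsubmx M1))).
  by rewrite leq_add2l (leq_trans leD) ?nzcols_mulmx.
apply: leq_trans (nzcols_rsubmx (i0 := 0) _) _; first by rewrite M1E !tpermR.
by rewrite /M1 xrowE (leq_trans (nzcols_mulmx _ _)) // nzcols_col_perm.
Qed.

Lemma snf_with_rank_exists m s (M : 'M[R]_(m, s)) :
  exists r, [/\ snf_with_rank M r, (r <= minn m s)%N & (r <= nzcols M)%N].
Proof.
have [P [Q [uP uQ snfD leD]]] := snf_exists M.
exists (n_nonzero_diag (P *m M *m Q)); split => //.
  by apply/existsP; exists P; apply/existsP; exists Q; rewrite uP uQ snfD eqxx.
by rewrite leq_min n_nonzero_diag_le (leq_trans leD) ?nzcols_le.
Qed.

Lemma snf_rank_min m s (M : 'M[R]_(m, s)) r :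
  snf_with_rank M r -> (r <= minn m s)%N -> (snf_rank M <= r)%N.
Proof.
move=> Mr le_r; rewrite leqNgt; apply/negP => /(before_find 0%N).
by rewrite nth_iota ?add0n ?Mr.
Qed.

Lemma snf_rankP m s (M : 'M[R]_(m, s)) : snf_with_rank M (snf_rank M).
Proof.
have [r [Mr le_r _]] := snf_with_rank_exists M.
have has_r : has (snf_with_rank M) (iota 0 (minn m s).+1).
  by apply/hasP; exists r; rewrite // mem_iota add0n ltnS.
have := nth_find 0%N has_r; rewrite nth_iota ?add0n //.
by rewrite -[X in (_ < X)%N](size_iota 0) -has_find.
Qed.

Lemma snf_rank_le_nzcols m s (M : 'M[R]_(m, s)) : (snf_rank M <= nzcols M)%N.
Proof.
have [r [Mr le_r le_nzcols]] := snf_with_rank_exists M.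
exact: leq_trans (snf_rank_min Mr le_r) le_nzcols.
Qed.

Lemma snf_with_rank_mulmx m s (M : 'M[R]_(m, s)) A r : A \in unitmx ->
  snf_with_rank (M *m A) r = snf_with_rank M r.
Proof.
move=> uA; apply/existsP/existsP => -[P /existsP[Q /and4P[uP uQ snfD rD]]].
  exists P; apply/existsP; exists (A *m Q).
  by rewrite !mulmxA in snfD rD *; rewrite unitmx_mul uA uQ uP snfD rD.
exists P; apply/existsP; exists (invmx A *m Q).
by rewrite !mulmxA mulmxK // unitmx_mul unitmx_inv uA uQ uP snfD rD.
Qed.

Lemma snf_rank_mulmx m s (M : 'M[R]_(m, s)) A : A \in unitmx ->
  snf_rank (M *m A) = snf_rank M.
Proof. by move=> uA; apply: eq_find => r; apply: snf_with_rank_mulmx. Qed.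

Lemma snf_rank_le_nzcols_mulmx m s (M : 'M[R]_(m, s)) A : A \in unitmx ->
  (snf_rank M <= nzcols (M *m A))%N.
Proof. by move=> uA; rewrite -(snf_rank_mulmx M uA) snf_rank_le_nzcols. Qed.

Lemma nzcols_mulmx_le_snf_rank m s (M : 'M[R]_(m, s)) :
  exists2 A, A \in unitmx & (nzcols (M *m A) <= snf_rank M)%N.
Proof.
have /existsP[P /existsP[Q /and4P[uP uQ snfD /eqP <-]]] := snf_rankP M.
exists Q => //; apply: leq_trans (nzcols_snf snfD).
by rewrite -[M *m Q](mulKmx uP) [P *m _]mulmxA nzcols_mulmx.
Qed.
End SmithNormalForm.

Section SumRankWeight.
Variable R : finComUnitRingType.
Hypothesis chainR : chain_ring R.
Variable m : nat.

Lemma card_Selt_gt1 : (0 < m)%N -> (1 < #|{: Selt R m}|)%N.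
Proof.
move=> m_gt0; apply/card_gt1P; exists 0, (const_mx 1); split => //.
by apply/eqP => /rowP /(_ (Ordinal m_gt0)) /eqP; rewrite !mxE eq_sym oner_eq0.
Qed.

Lemma coord_mx_inj s : injective (@coord_mx R m s).
Proof.
move=> c d /matrixP cd; apply/rowP => j; apply/rowP => i.
by have := cd i j; rewrite !mxE.
Qed.

Lemma coord_mxB s (c d : 'rV[Selt R m]_s) :
  coord_mx (c - d) = coord_mx c - coord_mx d.
Proof. by apply/matrixP => i j; rewrite !mxE. Qed.

Lemma coord_mx_act s (c : 'rV[Selt R m]_s) (A : 'M[R]_s) :
  coord_mx (act_mx c A) = coord_mx c *m A.
Proof.
apply/matrixP => i j; rewrite !mxE summxE; apply: eq_bigr => k _.
by rewrite !mxE mulrC.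
Qed.

Lemma act_mxB s (c d : 'rV[Selt R m]_s) A :
  act_mx (c - d) A = act_mx c A - act_mx d A.
Proof. by apply: coord_mx_inj; rewrite coord_mxB !coord_mx_act coord_mxB mulmxBl. Qed.

Variables (l : nat) (ns : 'I_l -> nat).
Local Notation n := (\sum_i ns i).

Lemma submxrow_mulmx_diag p (X : 'M[R]_(p, n)) (A : forall i, 'M[R]_(ns i)) i :
  submxrow (X *m mxdiag A) i = submxrow X i *m A i.
Proof. by rewrite -{1}[X]submxrowK mul_mxrow_mxdiag mxrowK. Qed.

Lemma act_mx_diag_inj (A : forall i, 'M[R]_(ns i)) : (forall i, A i \in unitmx) ->
  injective (fun c : 'rV[Selt R m]_n => act_mx c (mxdiag A)).
Proof.
move=> uA c d /(congr1 (@coord_mx R m _)) /=; rewrite !coord_mx_act => cAd.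
apply/coord_mx_inj/mxrowP => i; have := congr1 (fun X => submxrow X i) cAd.
by rewrite /= !submxrow_mulmx_diag; apply: (can_inj (mulmxK (uA i))).
Qed.

Lemma card_code_diag (C : {set 'rV[Selt R m]_n}) (A : forall i, 'M[R]_(ns i)) :
  (forall i, A i \in unitmx) -> #|code_diag C A| = #|C|.
Proof. by move=> uA; rewrite card_imset //; apply: act_mx_diag_inj. Qed.

Lemma wt_H_coord s (c : 'rV[Selt R m]_s) : wt_H c = nzcols (coord_mx c).
Proof.
apply: eq_card => j; rewrite !inE; apply/idP/existsP => [|[i]].
  by case/matrix0Pn => _ [i /[!ord1] nzc]; exists i; rewrite mxE.
by rewrite mxE; apply: contraNneq => ->; rewrite mxE.
Qed.

Lemma wt_SR_coord (c : 'rV[Selt R m]_n) :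
  wt_SR c = (\sum_i snf_rank (submxrow (coord_mx c) i))%N.
Proof. by apply: eq_bigr => i _; congr snf_rank; apply/matrixP => a b; rewrite !mxE. Qed.

Lemma wt_H_act_diag (c : 'rV[Selt R m]_n) (A : forall i, 'M[R]_(ns i)) :
  wt_H (act_mx c (mxdiag A)) = (\sum_i nzcols (submxrow (coord_mx c) i *m A i))%N.
Proof.
rewrite wt_H_coord coord_mx_act nzcols_mxrow.
by under eq_bigr do rewrite submxrow_mulmx_diag.
Qed.

Lemma wt_SR_le_wt_H_act (c : 'rV[Selt R m]_n) (A : forall i, 'M[R]_(ns i)) :
  (forall i, A i \in unitmx) -> (wt_SR c <= wt_H (act_mx c (mxdiag A)))%N.
Proof.
move=> uA; rewrite wt_SR_coord wt_H_act_diag; apply: leq_sum => i _.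
exact: snf_rank_le_nzcols_mulmx.
Qed.

Lemma wt_H_act_le_wt_SR (c : 'rV[Selt R m]_n) :
  exists2 A : forall i, 'M[R]_(ns i), (forall i, A i \in unitmx) &
    (wt_H (act_mx c (mxdiag A)) <= wt_SR c)%N.
Proof.
have [A uA leA] := fin_all_exists2
  (fun i => nzcols_mulmx_le_snf_rank chainR (submxrow (coord_mx c) i)).
by exists A; rewrite // wt_SR_coord wt_H_act_diag; apply: leq_sum.
Qed.
End SumRankWeight.

Section MinimumDistance.
Variables (R : finComUnitRingType) (m n : nat).
Implicit Types (C D : {set 'rV[Selt R m]_n}) (wt : 'rV[Selt R m]_n -> nat).

Lemma min_dist_le wt C c d :
  c \in C -> d \in C -> d != c -> (min_dist wt C <= wt (c - d)%R)%N.
Proof.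
move=> cC dC dc; rewrite /min_dist -minEnat.
rewrite -leEnat; apply: (bigmin_inf c) => //; apply: (bigmin_inf d) => //; exact/andP.
Qed.

Lemma min_dist_le_default wt C : (min_dist wt C <= n.+1)%N.
Proof. by rewrite /min_dist -minEnat -leEnat bigmin_le_id. Qed.

Lemma leq_min_dist wt C b : (b <= n.+1)%N ->
  (forall c d, c \in C -> d \in C -> d != c -> b <= wt (c - d)%R)%N ->
  (b <= min_dist wt C)%N.
Proof.
move=> b_le wt_ge; rewrite /min_dist -minEnat -leEnat.
apply: le_bigmin => // c cC; apply: le_bigmin => // d /andP[dC dc].
exact: wt_ge.
Qed.
End MinimumDistance.

Section SingletonBound.
Variables (R : finComUnitRingType) (m n : nat).
Implicit Type D : {set 'rV[Selt R m]_n}.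

Lemma wt_H_gt0 (c : 'rV[Selt R m]_n) : c != 0 -> (0 < wt_H c)%N.
Proof.
by case/matrix0Pn => i [j nzc]; rewrite card_gt0; apply/set0Pn; exists j; rewrite inE -(ord1 i).
Qed.

Lemma d_H_gt0 D : (0 < d_H D)%N.
Proof.
by apply: leq_min_dist => // c d _ _ neq_dc; apply: wt_H_gt0; rewrite subr_eq0 eq_sym.
Qed.

Lemma wt_H_le_prefix0 t (tn : (t <= n)%N) (c : 'rV[Selt R m]_n) :
  (forall j : 'I_t, c 0 (widen_ord tn j) = 0) -> (wt_H c <= n - t)%N.
Proof.
move=> c0; pose W := [set widen_ord tn j | j : 'I_t].
have cardW : #|W| = t.
  by rewrite card_imset ?card_ord // => a b /(congr1 val) /= /val_inj.
have := cardsC W; rewrite cardW card_ord => cardCW.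
suff: (wt_H c <= #|~: W|)%N by lia.
apply/subset_leq_card/subsetP => j; rewrite !inE; apply: contra => /imsetP[j' _ ->].
by rewrite c0.
Qed.

Lemma card_le_singleton D : (#|D| <= #|{: Selt R m}| ^ (n.+1 - d_H D))%N.
Proof.
have d_gt0 := d_H_gt0 D; have tn : (n.+1 - d_H D <= n)%N by lia.
set t := (n.+1 - d_H D)%N in tn *.
pose proj (c : 'rV[Selt R m]_n) := [ffun j : 'I_t => c 0 (widen_ord tn j)].
have proj_inj : {in D &, injective proj}.
  move=> c d cD dD /ffunP eq_cd; apply/eqP; apply: contraT => neq_cd.
  have dH_le : (d_H D <= wt_H (c - d))%N by apply: min_dist_le; rewrite // eq_sym.
  have : (wt_H (c - d) <= n - t)%N.
    by apply: wt_H_le_prefix0 => j; have := eq_cd j; rewrite !ffunE !mxE => ->; rewrite subrr.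
  lia.
rewrite -(card_in_imset proj_inj); apply: leq_trans (max_card _) _.
by rewrite card_ffun card_ord.
Qed.

Lemma singleton_bound D k : (1 < #|{: Selt R m}|)%N ->
  #|D| = (#|{: Selt R m}| ^ k)%N -> (d_H D + k <= n.+1)%N.
Proof.
move=> q_gt1 cardD; have := card_le_singleton D; rewrite cardD leq_exp2l //.
by have := min_dist_le_default (@wt_H R m n) D; rewrite -/(d_H D); lia.
Qed.
End SingletonBound.

Section SumRankDistance.
Variable R : finComUnitRingType.
Hypothesis chainR : chain_ring R.
Variables (m l : nat) (ns : 'I_l -> nat).
Local Notation n := (\sum_i ns i).
Variable C : {set 'rV[Selt R m]_n}.

Lemma d_SR_le_d_H_code_diag (A : forall i, 'M[R]_(ns i)) :
  (forall i, A i \in unitmx) -> (d_SR C <= d_H (code_diag C A))%N.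
Proof.
move=> uA; apply: leq_min_dist; first exact: min_dist_le_default.
move=> _ _ /imsetP[c cC ->] /imsetP[d dC ->] neq_dc.
rewrite -act_mxB; apply: leq_trans (wt_SR_le_wt_H_act chainR _ uA).
by apply: min_dist_le => //; apply: contraNneq neq_dc => ->.
Qed.

Lemma leq_d_SR b : (b <= n.+1)%N ->
  (forall A : forall i, 'M[R]_(ns i),
     (forall i, A i \in unitmx) -> b <= d_H (code_diag C A))%N ->
  (b <= d_SR C)%N.
Proof.
move=> b_le b_dH; apply: leq_min_dist => // c d cC dC neq_dc.
have [A uA leA] := wt_H_act_le_wt_SR chainR (c - d).
apply: leq_trans (b_dH A uA) (leq_trans _ leA); rewrite act_mxB.
apply: min_dist_le; [exact: imset_f | exact: imset_f |].
by apply: contra neq_dc => /eqP /(act_mx_diag_inj uA) ->.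
Qed.
End SumRankDistance.

Unset Implicit Arguments. Set Strict Implicit.

Theorem lemma3 (R : finComUnitRingType) (h : {poly R})
  (chainR : chain_ring R) (h_monic : h \is monic)
  (h_irr : irreducible_mod_max h)
  (l : nat) (ns : 'I_l -> nat)
  (C : {set 'rV[Selt R (size h).-1]_(\sum_i ns i)}) (k : nat)
  (k_pos : (0 < k)%N) (hC : #|C| = (#|{: Selt R (size h).-1}| ^ k)%N) :
  MSRD C <->
  (forall A : forall i : 'I_l, 'M[R]_(ns i),
     (forall i, A i \in unitmx) -> MDS (code_diag C A)).
Proof.
have q_gt1 : (1 < #|{: Selt R (size h).-1}|)%N.
  by apply: card_Selt_gt1; case: h_irr => size_h _; lia.
have log_card k' : #|C| = (#|{: Selt R (size h).-1}| ^ k')%N -> k' = k.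
  by rewrite hC => /eqP; rewrite eqn_exp2l // => /eqP.
split => [[k' [_ [/log_card-> dSR]]] A uA | MDS_CA].
  have cardCA : #|code_diag C A| = (#|{: Selt R (size h).-1}| ^ k)%N.
    by rewrite card_code_diag.
  exists k; split => //.
  have := d_SR_le_d_H_code_diag chainR C uA; have := singleton_bound q_gt1 cardCA.
  lia.
have dH_CA A : (forall i, A i \in unitmx) ->
    (d_H (code_diag C A) + k = (\sum_i ns i).+1)%N.
  move=> uA; have [k' [cardCA dH]] := MDS_CA A uA.
  by rewrite -(log_card k') // -(card_code_diag C uA).
exists k; split => //; split => //.
have u1 i : (1%:M : 'M[R]_(ns i)) \in unitmx by apply: unitmx1.
have := d_SR_le_d_H_code_diag chainR C u1; have := dH_CA _ u1.
have : ((\sum_i ns i).+1 - k <= d_SR C)%N.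
  by apply: (leq_d_SR chainR) => [|A /dH_CA]; [apply: leq_subr | lia].
lia.
Qed.
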